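(* Let $P$ and $U$ be finite sets of points in $\mathbb{R}^d$ with $|P|=n_{\mathrm p}$, $|U|=n_{\mathrm u}$, let $\pi\in(0,1)$, $w_{\mathrm p}=\pi/n_{\mathrm p}$, $w_{\mathrm u}=1/n_{\mathrm u}$, and let $P'\subseteq P$, $U'\subseteq U$, not both empty. Let $W_{\mathrm p}=|P'|w_{\mathrm p}$, $W_{\mathrm n}=|U'|w_{\mathrm u}-|P'|w_{\mathrm p}$ and $v^*=\frac{W_{\mathrm p}}{W_{\mathrm p}+W_{\mathrm n}}$ (with $v^*=+\infty$ if $W_{\mathrm p}+W_{\mathrm n}=0$). For a loss $\ell$ define $$\hat R_{\mathrm{uPU}}(v;P',U')=\sum_{\mathbf{x}\in P'}w_{\mathrm p}\ell(v,+1)-\sum_{\mathbf{x}\in P'}w_{\mathrm p}\ell(v,-1)+\sum_{\mathbf{x}\in U'}w_{\mathrm u}\ell(v,-1),$$ $$\hat R_{\mathrm{nnPU}}(v;P',U')=\sum_{\mathbf{x}\in P'}w_{\mathrm p}\ell(v,+1)+\max\Bigl\{0,\sum_{\mathbf{x}\in U'}w_{\mathrm u}\ell(v,-1)-\sum_{\mathbf{x}\in P'}w_{\mathrm p}\ell(v,-1)\Bigr\}.$$ Suppose $\ell$ is any of the quadratic loss $(1-vy)^2$, the logistic loss $\ln(1+\exp(-vy))$, the savage loss $4/(1+\exp(vy))^2$, or the sigmoid loss $1/(1+\exp(vy))$. Then, for both $\hat R=\hat R_{\mathrm{uPU}}$ and $\hat R=\hat R_{\mathrm{nnPU}}$, the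 prediction $2\,\mathbb{1}(v^*>0.5)-1$ minimizes $\hat R(v;P',U')$ over $v\in\{-1,+1\}$.
   Context: $\mathbb{1}(\cdot)$ is the indicator function. The quantity $v^*$ is an estimate of the proportion of positive examples at a decision-tree node containing positive examples $P'$ and unlabeled examples $U'$. *)

From HB Require Import structures.
From mathcomp Require Import all_boot all_order all_algebra finmap.
From mathcomp Require Import all_classical all_reals all_analysis.
Set Implicit Arguments. Unset Strict Implicit. Unset Printing Implicit Defensive.
Import Order.TTheory GRing.Theory Num.Theory.
Local Open Scope ring_scope.

Section Defs.
Variable R : realType.

Definition quadratic_loss (v y : R) : R := (1 - v * y) ^+ 2.
Definition logistic_loss (v y : R) : R := ln (1 + expR (- (v * y))).
Definition savage_loss (v y : R) : R := 4 / (1 + expR (v * y)) ^+ 2.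
Definition sigmoid_loss (v y : R) : R := 1 / (1 + expR (v * y)).

Definition paper_loss (l : R -> R -> R) : Prop :=
  l = quadratic_loss \/ l = logistic_loss \/ l = savage_loss \/ l = sigmoid_loss.

Variable d : nat.
Notation pt := 'rV[R]_d.

Definition R_uPU (l : R -> R -> R) (wp wu : R) (P' U' : {fset pt}) (v : R) : R :=
  \sum_(x <- P') wp * l v 1 - \sum_(x <- P') wp * l v (-1)
  + \sum_(x <- U') wu * l v (-1).

Definition R_nnPU (l : R -> R -> R) (wp wu : R) (P' U' : {fset pt}) (v : R) : R :=
  \sum_(x <- P') wp * l v 1
  + Num.max 0 (\sum_(x <- U') wu * l v (-1) - \sum_(x <- P') wp * l v (-1)).

Definition vstar (Wp Wn : R) : \bar R :=
  if Wp + Wn == 0 then +oo%E else (Wp / (Wp + Wn))%:E.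

Definition prediction (vs : \bar R) : R :=
  2 * (if ((2^-1)%:E < vs)%E then 1 else 0) - 1.

End Defs.

From HB Require Import structures.
From mathcomp Require Import all_boot all_order all_algebra finmap.
From mathcomp Require Import all_classical all_reals all_analysis.
From mathcomp Require Import ring lra.
Set Implicit Arguments. Unset Strict Implicit. Unset Printing Implicit Defensive.
Import Order.TTheory GRing.Theory Num.Theory.
Local Open Scope ring_scope.

(* Both risks depend on the node only through the weights [Wp] (positives) and
   [Wn] (unlabeled minus positives); all four losses are margin losses
   [phi (v y)] with [0 <= phi 1 <= phi (-1)], i.e. a correct label costs less
   than a wrong one.  Hence predicting [+1] is optimal exactly when [Wn <= Wp],
   the rearrangement inequality, and this is what [v^* > 1/2] tests.  For nnPU,
   when [-1] is predicted one has [0 <= Wp <= Wn], so the clipping at [0] is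
   inactive; when [+1] is predicted the clipping can only help. *)

Definition margin_loss (R : pzRingType) (phi : R -> R) (v y : R) : R := phi (v * y).

Lemma paper_loss_margin (R : realType) (l : R -> R -> R) : paper_loss l ->
  exists2 phi : R -> R, l = margin_loss phi & 0 <= phi 1 <= phi (-1).
Proof.
have e_pos m : 0 < 1 + expR m :> R by rewrite addr_gt0 ?expR_gt0.
have e_le : expR (-1) <= expR 1 :> R by rewrite ler_expR; lra.
case=> [->|[->|[->|->]]].
- exists (fun m => (1 - m) ^+ 2) => //=.
  by rewrite subrr expr0n /= lexx sqr_ge0.
- exists (fun m => ln (1 + expR (- m))) => //=; rewrite opprK.
  rewrite ln_ge0 /= ?ler_ln ?posrE ?lerD2l //.
  by rewrite lerDl ltW ?expR_gt0.
- exists (fun m => 4 / (1 + expR m) ^+ 2) => //=.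
  rewrite divr_ge0 ?sqr_ge0 //= ler_pM2l // lef_pV2 ?posrE ?exprn_gt0 //.
  by apply: lerXn2r; rewrite ?nnegrE ?lerD2l // ltW ?e_pos.
- exists (fun m => 1 / (1 + expR m)) => //=.
  by rewrite !div1r invr_ge0 ltW //= lef_pV2 ?posrE ?lerD2l.
Qed.

Lemma sum_fset_cst (T : choiceType) (V : pzSemiRingType) (A : {fset T}) (c : V) :
  \sum_(x <- A) c = (#|` A|)%:R * c.
Proof.
rewrite card_fset_sum1 natr_sum mulr_suml.
by apply: eq_bigr => _ _; rewrite mul1r.
Qed.

Section RiskWeights.
Variables (R : realType) (d : nat) (phi : R -> R) (wp wu : R).
Variables (P' U' : {fset 'rV[R]_d}).

Let Wp := (#|` P'|)%:R * wp.
Let Wn := (#|` U'|)%:R * wu - (#|` P'|)%:R * wp.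

Lemma R_uPU_margin (v : R) :
  R_uPU (margin_loss phi) wp wu P' U' v = Wp * phi v + Wn * phi (- v).
Proof. by rewrite /R_uPU /margin_loss !sum_fset_cst mulr1 mulrN1 /Wp /Wn; ring. Qed.

Lemma R_nnPU_margin (v : R) :
  R_nnPU (margin_loss phi) wp wu P' U' v =
  Wp * phi v + Num.max 0 (Wn * phi (- v)).
Proof.
rewrite /R_nnPU /margin_loss !sum_fset_cst mulr1 mulrN1 /Wp /Wn.
by congr (_ + Num.max 0 _); ring.
Qed.

End RiskWeights.

Lemma prediction_sign (R : realType) (vs : \bar R) :
  prediction vs = if (2^-1%:E < vs)%E then 1 else -1.
Proof. by rewrite /prediction; case: ifP => _; lra. Qed.

Variant prediction_spec (R : numDomainType) (Wp Wn : R) : R -> Prop :=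
  | PredictPos of Wn <= Wp : prediction_spec Wp Wn 1
  | PredictNeg of Wp <= Wn : prediction_spec Wp Wn (-1).

Lemma predictionP (R : realType) (Wp Wn : R) : 0 <= Wp -> 0 <= Wp + Wn ->
  prediction_spec Wp Wn (prediction (vstar Wp Wn)).
Proof.
move=> Wp_ge0 W_ge0; rewrite prediction_sign /vstar.
have [W_eq0|W_neq0] := eqVneq (Wp + Wn) 0.
  by rewrite ltry; constructor; lra.
have W_gt0 : 0 < Wp + Wn by rewrite lt0r W_neq0.
rewrite lte_fin ltr_pdivlMr // mulrC.
by case: ltP => W_half; constructor; lra.
Qed.

Lemma ler_rearrange2 (R : numDomainType) (x y a b : R) :
  y <= x -> a <= b -> x * a + y * b <= x * b + y * a.
Proof.
move=> le_yx le_ab; rewrite -subr_ge0.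
have -> : x * b + y * a - (x * a + y * b) = (x - y) * (b - a) by ring.
by rewrite mulr_ge0 // subr_ge0.
Qed.

Lemma ler_clipped_rearrange2 (R : realDomainType) (x y a b : R) :
  0 <= x -> 0 <= a -> y <= x -> a <= b ->
  x * a + Num.max 0 (y * b) <= x * b + Num.max 0 (y * a).
Proof.
move=> x_ge0 a_ge0 le_yx le_ab; have b_ge0 : 0 <= b := le_trans a_ge0 le_ab.
have [y_ge0|y_lt0] := leP 0 y.
  by rewrite !max_r ?mulr_ge0 // ler_rearrange2.
rewrite !max_l ?mulr_le0_ge0 ?(ltW y_lt0) // !addr0.
exact: ler_wpM2l.
Qed.

Theorem proposition4 (R : realType) (d : nat) (P U P' U' : {fset 'rV[R]_d})
  (pi : R) (l : R -> R -> R) :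
  0 < pi < 1 ->
  (P' `<=` P)%fset -> (U' `<=` U)%fset ->
  (P' != fset0 \/ U' != fset0) ->
  paper_loss l ->
  let wp := pi / (#|` P|)%:R in
  let wu := 1 / (#|` U|)%:R in
  let Wp := (#|` P'|)%:R * wp in
  let Wn := (#|` U'|)%:R * wu - (#|` P'|)%:R * wp in
  let yhat := prediction (vstar Wp Wn) in
  forall v : R, (v = 1 \/ v = -1) ->
    R_uPU l wp wu P' U' yhat <= R_uPU l wp wu P' U' v /\
    R_nnPU l wp wu P' U' yhat <= R_nnPU l wp wu P' U' v.
Proof.
move=> /andP[pi_gt0 _] _ _ _ /paper_loss_margin[phi -> /andP[phi1_ge0 phi1_le]].
move=> wp wu Wp Wn yhat v v_pm1.
have Wp_ge0 : 0 <= Wp by rewrite mulr_ge0 // divr_ge0 // ltW.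
have W_ge0 : 0 <= Wp + Wn by rewrite /Wn /Wp addrC subrK mulr_ge0 // divr_ge0.
rewrite /yhat; case: predictionP => // [Wn_le|Wp_le];
  case: v_pm1 => ->; rewrite !R_uPU_margin !R_nnPU_margin ?opprK -/Wp -/Wn //.
- split; first exact: ler_rearrange2 Wn_le phi1_le.
  exact: ler_clipped_rearrange2 Wp_ge0 phi1_ge0 Wn_le phi1_le.
- have Wn_ge0 : 0 <= Wn := le_trans Wp_ge0 Wp_le.
  have phiN1_ge0 : 0 <= phi (-1) := le_trans phi1_ge0 phi1_le.
  rewrite (max_r (mulr_ge0 Wn_ge0 phi1_ge0)) (max_r (mulr_ge0 Wn_ge0 phiN1_ge0)).
  by split; rewrite addrC [leRHS]addrC; exact: ler_rearrange2 Wp_le phi1_le.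
Qed.
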